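(* Let $\alpha\in\Lambda$ be an infinite multiindex. For any $\beta,\gamma\in\Lambda$ the limit \[ q(\gamma,\beta)=\lim_{m\to\infty} q\big((\gamma_1,\dots,\gamma_m),(\beta_1,\dots,\beta_m)\big) \] exists. Moreover, on the complex vector space $\tilde H_\alpha$ having as a basis the formal symbols $e_\beta$, $\beta\sim\alpha$, the sesquilinear form determined by \[ (e_\beta,e_\gamma)=q(\gamma,\beta),\qquad \beta,\gamma\sim\alpha, \] is Hermitian and positive, i.e. $\sum_{k,l} c_k\overline{c_l}\,(e_{\beta^{(k)}},e_{\beta^{(l)}})\ge 0$ for all finite families of scalars $c_k$ and multiindices $\beta^{(k)}\sim\alpha$. In addition, $(e_\beta,e_\gamma)=0$ unless there exists $m$ with $\sigma^m(\beta)=\sigma^m(\gamma)$, in which case $(e_\beta,e_\gamma)=(e_{(\beta_1,\dots,\beta_m)},e_{(\gamma_1,\dots,\gamma_m)})_{\mathcal F}$.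
   Context: Fix $d\ge 2$ and complex numbers $q_{ij}$, $1\le i\ne j\le d$, with $|q_{ij}|<1$ and $q_{ij}=\overline{q_{ji}}$. Let $W$ be the universal $C^*$-algebra generated by $s_1,\dots,s_d$ subject to $s_i^*s_i=I$ and $s_i^*s_j=q_{ij}s_js_i^*$ for $i\ne j$. Let $\Lambda_m=\{1,\dots,d\}^m$ (with $\Lambda_0$ consisting of the empty multiindex $\emptyset$), $\Lambda^0=\bigcup_{m\ge0}\Lambda_m$, and $\Lambda=\{1,\dots,d\}^{\mathbb N}$ the set of infinite multiindices. For finite $\alpha=(\alpha_1,\dots,\alpha_m)$ put $s_\alpha=s_{\alpha_1}\cdots s_{\alpha_m}$, $s_\emptyset=I$. The shift is $\sigma(\alpha_1,\alpha_2,\dots)=(\alpha_2,\alpha_3,\dots)$. Two infinite multiindices are equivalent, $\beta\sim\alpha$, if there are $m,n\ge0$ with $\sigma^m(\beta)=\sigma^n(\alpha)$. Fock representation: $\pi_F$ is the $*$-representation of $W$ on a Hilbert space $\mathcal F$ with a unit vector $\Omega$ such that $\pi_F(s_j)^*\Omega=0$ for all $j$ and the vectors $e_\alpha=\pi_F(s_\alpha)\Omega$, $\alpha\in\Lambda^0$, span a dense subspace; $\mathcal F_n=\mathrm{span}\{e_\alpha:\alpha\in\Lambda_n\}$, and these subspaces are mutually orthogonal. For finite $\alpha,\beta\in\Lambda_m$ define $q(\alpha,\beta)=\langle \pi_F(s_\alpha)^*\pi_F(s_\beta)\Omega,\Omega\rangle=(e_\beta,e_\alpha)_{\mathcal F}$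 (this is nonzero only if $\beta$ is a permutation of $\alpha$). *)

From HB Require Import structures.
From mathcomp Require Import all_boot all_order all_algebra.
From mathcomp Require Import all_classical all_reals.
From mathcomp Require Import complex.
Set Implicit Arguments. Unset Strict Implicit. Unset Printing Implicit Defensive.
Import Order.TTheory GRing.Theory Num.Theory.
Local Open Scope ring_scope.

(* Finite multiindices: seq 'I_d.  Infinite multiindices: nat -> 'I_d. *)
Definition infmi (d : nat) := nat -> 'I_d.

Definition shift (d : nat) (m : nat) (b : infmi d) : infmi d :=
  fun n => b (n + m)%N.

Definition mi_equiv (d : nat) (b a : infmi d) : Prop :=
  exists m n : nat, shift m b = shift n a.

Definition trunc (d : nat) (b : infmi d) (m : nat) : seq 'I_d := mkseq b m.

(* A Fock representation of the relations of W:  a complex (pre-)Hilbert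
   space H with inner product fip (linear in the first, conjugate-linear in
   the second variable), operators fS j = pi_F(s_j) with adjoints fSa j =
   pi_F(s_j)^*, satisfying the defining relations of W, and a unit vacuum
   vector fOmega with fSa j fOmega = 0. *)
Record FockRep (R : realType) (d : nat) (q : 'I_d -> 'I_d -> R[i]) := {
  fH : lmodType R[i];
  fip : fH -> fH -> R[i];
  ip_linl : forall (a : R[i]) (x y z : fH), fip (a *: x + y) z = a * fip x z + fip y z;
  ip_herm : forall x y : fH, fip x y = (fip y x)^*;
  ip_pos : forall x : fH, 0 <= fip x x;
  ip_def : forall x : fH, fip x x = 0 -> x = 0;
  fS : 'I_d -> fH -> fH;
  fSa : 'I_d -> fH -> fH;
  S_lin : forall j (a : R[i]) (x y : fH), fS j (a *: x + y) = a *: fS j x + fS j y;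
  Sa_lin : forall j (a : R[i]) (x y : fH), fSa j (a *: x + y) = a *: fSa j x + fSa j y;
  S_adj : forall j (x y : fH), fip (fS j x) y = fip x (fSa j y);
  rel_iso : forall j (x : fH), fSa j (fS j x) = x;
  rel_q : forall i j (x : fH), i != j -> fSa i (fS j x) = q i j *: fS j (fSa i x);
  fOmega : fH;
  Omega_unit : fip fOmega fOmega = 1;
  Sa_Omega : forall j, fSa j fOmega = 0
}.

(* pi_F(s_a) x = fS a_1 (fS a_2 (... (fS a_m x))) *)
Arguments fS {R d q} f _ _.
Arguments fSa {R d q} f _ _.
Arguments fip {R d q} f _ _.
Arguments fOmega {R d q} f.
Definition Sword R d q (F : @FockRep R d q) (a : seq 'I_d) (x : fH F) : fH F :=
  foldr (fun j y => fS F j y) x a.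

(* pi_F(s_a)^* x = fSa a_m (... (fSa a_1 x)) *)
Definition Saword R d q (F : @FockRep R d q) (a : seq 'I_d) (x : fH F) : fH F :=
  foldl (fun y j => fSa F j y) x a.

Arguments Sword {R d q} F a x.
Arguments Saword {R d q} F a x.

(* q(a,b) = < pi_F(s_a)^* pi_F(s_b) fOmega, fOmega > for finite a, b. *)
Definition qF R d q (F : @FockRep R d q) (a b : seq 'I_d) : R[i] :=
  fip F (Saword F a (Sword F b (fOmega F))) (fOmega F).

Definition fock_ip R d q (F : @FockRep R d q) (b a : seq 'I_d) : R[i] :=
  fip F (Sword F b (fOmega F)) (Sword F a (fOmega F)).

Arguments qF {R d q} F a b.
Arguments fock_ip {R d q} F b a.

Definition seq_cvg_to (C : numFieldType) (u : nat -> C) (l : C) : Prop :=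
  forall eps : C, 0 < eps -> exists N : nat, forall m : nat, (N <= m)%N -> `|u m - l| < eps.

From HB Require Import structures.
From mathcomp Require Import all_boot all_order all_algebra.
From mathcomp Require Import all_classical all_reals.
From mathcomp Require Import complex.
From mathcomp Require Import topology normedtype sequences.
From mathcomp Require Import zify.
Import Order.TTheory GRing.Theory Num.Theory.
Set Implicit Arguments. Unset Strict Implicit. Unset Printing Implicit Defensive.
Local Open Scope ring_scope.

(* Applying s_i^* to e_b deletes the first occurrence of i in b, at the price
   of the product of the q_{i b_k} over the letters b_k preceding it.  Hence
   q(a, b) is a product of entries of q, one per "crossing" needed to move the
   letters of b into the order of a.  A common suffix of a and b costs nothing,
   so if beta and gamma agree from position m on, the truncated values are
   constant for large m and equal the Fock inner product at level m.  If they
   never agree on a tail, the number of crossings of the truncations tends to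
   infinity, so with c = max |q_ij| < 1 the truncated values are bounded by
   vanishing powers of c.  Hermitian symmetry and positivity pass to the limit
   from the Fock inner product, since sum_{k,l} c_k c_l^* q(b_l|m, b_k|m) is
   the squared norm of sum_k c_k e_{b_k|m}. *)

Section Qword.
Variables (R : realType) (d : nat) (q : 'I_d -> 'I_d -> R[i]).

Fixpoint qcoef (i : 'I_d) (b : seq 'I_d) : R[i] :=
  if b is j :: b' then (if j == i then 1 else q i j * qcoef i b') else 0.

Fixpoint qword (a b : seq 'I_d) : R[i] :=
  if a is i :: a' then qcoef i b * qword a' (rem i b) else (b == [::])%:R.

Fixpoint qcost (a b : seq 'I_d) : nat :=
  if a is i :: a' then (index i b + qcost a' (rem i b))%N else 0%N.

Lemma qcoef_notin i b : i \notin b -> qcoef i b = 0.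
Proof.
elim: b => //= j b IH; rewrite in_cons negb_or => /andP[/negPf ij /IH ->].
by rewrite eq_sym ij mulr0.
Qed.

Lemma qcoef_cat i b w : i \in b -> qcoef i (b ++ w) = qcoef i b.
Proof. by elim: b => //= j b IH; rewrite in_cons eq_sym; case: eqP => // _ /IH ->. Qed.

Lemma rem_catl (i : 'I_d) b w : i \in b -> rem i (b ++ w) = rem i b ++ w.
Proof. by elim: b => //= j b IH; rewrite in_cons eq_sym; case: eqP => // _ /IH ->. Qed.

Lemma qword_perm_eq a b : qword a b != 0 -> perm_eq a b.
Proof.
elim: a b => [|i a IH] b /=; first by case: b => //= ? ?; rewrite eqxx.
rewrite mulf_eq0 negb_or => /andP[qi /IH p].
have ib : i \in b by apply: contraNT qi => /qcoef_notin ->.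
by rewrite perm_sym (perm_trans (perm_to_rem ib)) // perm_cons perm_sym.
Qed.

Lemma qword_refl w : qword w w = 1.
Proof. by elim: w => //= i w IH; rewrite !eqxx IH mulr1. Qed.

Lemma qword_cat2r g b w : qword (g ++ w) (b ++ w) = qword g b.
Proof.
elim: g b => [|i g IH] b /=.
  case: b => [|j b] /=; first exact: qword_refl.
  apply/eqP; apply: contraT => /qword_perm_eq /perm_size /=.
  by rewrite size_cat; lia.
have [ib|ib] := boolP (i \in b); first by rewrite qcoef_cat // rem_catl // IH.
rewrite (qcoef_notin ib) mul0r; apply/eqP; apply: contraT => nz.
have := qword_perm_eq (nz : qword (i :: g ++ w) (b ++ w) != 0).
by rewrite -cat_cons perm_cat2r => /perm_mem/(_ i); rewrite mem_head (negPf ib).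
Qed.

Lemma qcost_cat g b u v :
  perm_eq g b -> qcost (g ++ u) (b ++ v) = (qcost g b + qcost u v)%N.
Proof.
elim: g b => [|i g IH] b /=; first by move=> /perm_size; case: b.
move=> p; have ib : i \in b by rewrite -(perm_mem p) mem_head.
have p' : perm_eq g (rem i b) by rewrite -(perm_cons i) (perm_trans p) ?perm_to_rem.
by rewrite index_cat ib rem_catl // IH //; lia.
Qed.

Lemma qcost_eq0 u v : perm_eq u v -> qcost u v = 0%N -> u = v.
Proof.
elim: u v => [|i u IH] [|j v] //=; try by move=> /perm_size.
by case: eqP => [->|] //=; rewrite perm_cons => p /(IH v p) ->.
Qed.

Variable c : R.
Hypotheses (c_ge0 : 0 <= c) (norm_q_le : forall i j, i != j -> `|q i j| <= c%:C%C).

Lemma norm_qcoef_le i b : `|qcoef i b| <= (c ^+ index i b)%:C%C.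
Proof.
elim: b => [|j b IH] /=; first by rewrite normr0 lecR exprn_ge0.
case: eqP => [_|ji]; first by rewrite normr1 expr0.
rewrite normrM exprS rmorphM /= ler_pM // norm_q_le //.
by apply/eqP => ij; apply: ji.
Qed.

Lemma norm_qword_le a b : `|qword a b| <= (c ^+ qcost a b)%:C%C.
Proof.
elim: a b => [|i a IH] b /=; first by case: (b == [::]); rewrite ?normr1 ?normr0.
by rewrite normrM exprD rmorphM /= ler_pM // norm_qcoef_le.
Qed.

End Qword.

Section Truncation.
Variable d : nat.

Lemma trunc_cat (b : infmi d) m0 m : (m0 <= m)%N ->
  trunc b m = trunc b m0 ++ trunc (shift m0 b) (m - m0).
Proof.
move=> le; rewrite /trunc /mkseq -{1}(subnKC le) iotaD map_cat add0n.
congr (_ ++ _); rewrite -{1}(addn0 m0) iotaDl -map_comp; apply: eq_map => k /=.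
by rewrite /shift addnC.
Qed.

Lemma nth_trunc (b : infmi d) m k x0 : (k < m)%N -> nth x0 (trunc b m) k = b k.
Proof. exact: nth_mkseq. Qed.

Variables (R : realType) (q : 'I_d -> 'I_d -> R[i]).

Lemma qword_trunc_shift (beta gamma : infmi d) n m :
  shift n beta = shift n gamma -> (n <= m)%N ->
  qword q (trunc gamma m) (trunc beta m) = qword q (trunc gamma n) (trunc beta n).
Proof. by move=> e le; rewrite (trunc_cat gamma le) (trunc_cat beta le) e qword_cat2r. Qed.

Lemma qcost_trunc_unbounded (beta gamma : infmi d) :
  (forall n, shift n beta <> shift n gamma) ->
  forall K, exists N, forall m, (N <= m)%N ->
    perm_eq (trunc gamma m) (trunc beta m) -> (K <= qcost (trunc gamma m) (trunc beta m))%N.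
Proof.
(* Past a level m0 >= N at which the truncations are permutations of each
   other, their tails from m0 on are permutations too; they differ, since the
   infinite tails do, hence cost at least one more crossing. *)
move=> nt; elim=> [|K [N HN]]; first by exists 0%N.
have [[m0 [Nm0 P0]]|none] :=
  pselect (exists m0, (N <= m0)%N /\ perm_eq (trunc gamma m0) (trunc beta m0)); last first.
  by exists N => m Nm P; exfalso; apply: none; exists m.
have [k hk] : exists k, beta (k + m0)%N <> gamma (k + m0)%N.
  apply: contrapT => hk; apply: (nt m0); apply: funext => k.
  by apply: contrapT => h; apply: hk; exists k.
exists (k + m0).+1 => m km P.
have le0 : (m0 <= m)%N by lia.
move: P; rewrite (trunc_cat gamma le0) (trunc_cat beta le0) => P.
set tg := trunc (shift m0 gamma) _; set tb := trunc (shift m0 beta) _.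
have Ptail : perm_eq tg tb.
  by rewrite -(perm_cat2l (trunc gamma m0)) (perm_trans P) // perm_cat2r perm_sym.
rewrite qcost_cat //; have := HN m0 Nm0 P0.
suff : qcost tg tb <> 0%N by lia.
move/(qcost_eq0 Ptail)/(congr1 (fun s => nth (gamma 0%N) s k)).
by rewrite !nth_trunc; [rewrite /shift => e; apply: hk | lia | lia].
Qed.

End Truncation.

Section Semilinear.
Variables (K : pzRingType) (U V : lmodType K) (f : U -> V).
Hypothesis f_lin : forall a x y, f (a *: x + y) = a *: f x + f y.

Lemma semilin0 : f 0 = 0.
Proof.
have := f_lin 1 0 0; rewrite !scale1r addr0 => f00.
by apply: (@addrI _ (f 0)); rewrite addr0 -f00.
Qed.

Lemma semilinZ a x : f (a *: x) = a *: f x.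
Proof. by rewrite -[a *: x]addr0 f_lin semilin0 addr0. Qed.

Lemma semilinD x y : f (x + y) = f x + f y.
Proof. by rewrite -[x]scale1r f_lin !scale1r. Qed.

End Semilinear.

Section Fock.
Variables (R : realType) (d : nat) (q : 'I_d -> 'I_d -> R[i]) (F : FockRep q).
Local Notation H := (fH F).
Local Notation Om := (fOmega F).
Local Notation ip := (fip F).

Let ip_semilin y a (x x' : H) : ip (a *: x + x') y = a *: (ip x y : R[i]^o) + ip x' y.
Proof. by rewrite ip_linl. Qed.

Lemma ip0l (y : H) : ip 0 y = 0.
Proof. exact: (semilin0 (@ip_semilin y)). Qed.

Lemma ipZl a (x y : H) : ip (a *: x) y = a * ip x y.
Proof. exact: (semilinZ (@ip_semilin y)). Qed.

Lemma ipDl (x x' y : H) : ip (x + x') y = ip x y + ip x' y.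
Proof. exact: (semilinD (@ip_semilin y)). Qed.

Lemma ip_fSa j (x z : H) : ip (fSa F j x) z = ip x (fS F j z).
Proof. by rewrite ip_herm -S_adj -ip_herm. Qed.

Lemma ip_Saword a (x y : H) : ip (Saword F a x) y = ip x (Sword F a y).
Proof. by elim: a x => [|i a IH] x //=; rewrite IH ip_fSa. Qed.

Lemma SawordZ a c (x : H) : Saword F a (c *: x) = c *: Saword F a x.
Proof. by elim: a x => //= i a IH x; rewrite (semilinZ (Sa_lin (f := F) i)) IH. Qed.

Lemma fSa_Sword_Omega i b : fSa F i (Sword F b Om) = qcoef q i b *: Sword F (rem i b) Om.
Proof.
elim: b => [|j b IH] /=; first by rewrite Sa_Omega scale0r.
case: eqP => [->|ji]; first by rewrite rel_iso scale1r.
have ij : i != j by apply/eqP => ij; apply: ji.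
by rewrite rel_q // IH (semilinZ (S_lin (f := F) j)) scalerA.
Qed.

Lemma ip_Sword_Omega c : ip (Sword F c Om) Om = (c == [::])%:R.
Proof.
case: c => [|j c] /=; first exact: Omega_unit.
by rewrite ip_herm -ip_fSa Sa_Omega ip0l conjC0.
Qed.

Lemma qF_qword a b : qF F a b = qword q a b.
Proof.
rewrite /qF; elim: a b => [|i a IH] b /=; first exact: ip_Sword_Omega.
by rewrite fSa_Sword_Omega SawordZ ipZl IH.
Qed.

Lemma qF_fock_ip a b : qF F a b = fock_ip F b a.
Proof. exact: ip_Saword. Qed.

Lemma qF_conj a b : qF F a b = (qF F b a)^*.
Proof. by rewrite !qF_fock_ip /fock_ip ip_herm. Qed.

Lemma qF_gram_ge0 n (c : 'I_n -> R[i]) (a : 'I_n -> seq 'I_d) :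
  0 <= \sum_(k < n) \sum_(l < n) c k * (c l)^* * qF F (a l) (a k).
Proof.
pose X := \sum_(k < n) c k *: Sword F (a k) Om.
have ipX_l y : ip X y = \sum_(k < n) c k * ip (Sword F (a k) Om) y.
  by rewrite /X; elim/big_rec2: _ => [|k _ s _ <-]; rewrite ?ip0l // ipDl ipZl.
suff -> : \sum_(k < n) \sum_(l < n) c k * (c l)^* * qF F (a l) (a k) = ip X X.
  exact: ip_pos.
rewrite ipX_l; apply: eq_bigr => k _; rewrite ip_herm ipX_l rmorph_sum mulr_sumr.
by apply: eq_bigr => l _; rewrite rmorphM /= -ip_herm qF_fock_ip mulrA.
Qed.

End Fock.

Section SeqCvg.
Variable C : numFieldType.

Lemma seq_cvg_eventually (u : nat -> C) l :
  (exists N, forall m, (N <= m)%N -> u m = l) -> seq_cvg_to u l.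
Proof. by move=> [N HN] e e0; exists N => m /HN ->; rewrite subrr normr0. Qed.

Lemma seq_cvgD (u v : nat -> C) a b :
  seq_cvg_to u a -> seq_cvg_to v b -> seq_cvg_to (fun m => u m + v m) (a + b).
Proof.
move=> hu hv e e0; have e2 : 0 < e / 2 by rewrite divr_gt0.
have [N1 h1] := hu _ e2; have [N2 h2] := hv _ e2.
exists (maxn N1 N2) => m; rewrite geq_max => /andP[m1 m2].
rewrite opprD addrACA (le_lt_trans (ler_normD _ _)) // [e]splitr.
by rewrite ltrD ?h1 ?h2.
Qed.

Lemma seq_cvgMl (u : nat -> C) a w :
  seq_cvg_to u a -> seq_cvg_to (fun m => w * u m) (w * a).
Proof.
move=> hu e e0; have [->|w0] := eqVneq w 0.
  by exists 0%N => m _; rewrite !mul0r subrr normr0.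
have w_gt0 : 0 < `|w| by rewrite normr_gt0.
have [N hN] := hu _ (divr_gt0 e0 w_gt0).
by exists N => m /hN; rewrite -mulrBr normrM -ltr_pdivlMl // mulrC.
Qed.

Lemma seq_cvg_sum (I : Type) (r : seq I) (u : I -> nat -> C) (l : I -> C) :
  (forall k, seq_cvg_to (u k) (l k)) ->
  seq_cvg_to (fun m => \sum_(k <- r) u k m) (\sum_(k <- r) l k).
Proof.
move=> hu; elim: r => [|k r IH].
  by apply: seq_cvg_eventually; exists 0%N => m _; rewrite !big_nil.
move=> e e0; have [N hN] := seq_cvgD (hu k) IH e0.
by exists N => m /hN; rewrite !big_cons.
Qed.

Lemma seq_cvg_ge0 (u : nat -> C) l : seq_cvg_to u l -> (forall m, 0 <= u m) -> 0 <= l.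
Proof.
move=> hu u_ge0; suff norm_l : `|l| = l by rewrite -norm_l normr_ge0.
apply/eqP; rewrite -subr_eq0; apply: contraT => nz.
have nz_gt0 : 0 < `| `|l| - l| by rewrite normr_gt0.
have [N hN] := hu _ (divr_gt0 nz_gt0 (ltr0n _ 2)).
have far : (`|u N - l| *+ 2) < `| `|l| - l|.
  by rewrite -mulr_natr -ltr_pdivlMr ?ltr0n // hN.
suff close : `| `|l| - l| <= `|u N - l| *+ 2 by have := lt_le_trans far close; rewrite ltxx.
have -> : `|l| - l = (`|l| - `|u N|) + (u N - l).
  by rewrite (ger0_norm (u_ge0 N)) addrA subrK.
rewrite mulr2n (le_trans (ler_normD _ _)) // lerD2r distrC.
exact: ler_dist_dist.
Qed.

End SeqCvg.

Lemma exists_expr_lt (R : realType) (c e : R) :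
  0 <= c -> c < 1 -> 0 < e -> exists K : nat, c ^+ K < e.
Proof.
move=> c_ge0 c_lt1 e0; have c_lt1' : `|c| < 1 by rewrite ger0_norm.
have [N _ hN] := cvgr0_norm_lt (V := R^o) _ (cvg_expr c_lt1') _ e0.
by exists N; move: (hN N (leqnn N)); rewrite ger0_norm ?exprn_ge0.
Qed.

Lemma exists_norm_bound_lt1 (R : realType) (d : nat) (q : 'I_d -> 'I_d -> R[i]) :
  (forall i j, i != j -> `|q i j| < 1) ->
  exists c : R, [/\ 0 <= c, c < 1 & forall i j, i != j -> `|q i j| <= c%:C%C].
Proof.
move=> hq; pose c := \big[Num.max/0]_(p : 'I_d * 'I_d | p.1 != p.2) complex.Re `|q p.1 p.2|.
exists c; split.
- by rewrite /c; elim/big_rec: _ => // p x _ hx; rewrite le_max hx orbT.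
- rewrite /c; elim/big_rec: _ => // p x np hx; rewrite gt_max hx andbT.
  by have := hq _ _ np; rewrite -(RRe_real (normr_real _)) ltcR.
- move=> i j ij; rewrite -(RRe_real (normr_real (q i j))) lecR /c (bigD1 (i, j)) //=.
  by rewrite le_max lexx.
Qed.

Section Limit.
Variables (R : realType) (d : nat) (q : 'I_d -> 'I_d -> R[i]).
Hypothesis hq : forall i j, i != j -> `|q i j| < 1.

Lemma qword_trunc_cvg0 (beta gamma : infmi d) : (forall n, shift n beta <> shift n gamma) ->
  seq_cvg_to (fun m => qword q (trunc gamma m) (trunc beta m)) 0.
Proof.
move=> nt eps eps0.
have [c [c_ge0 c_lt1 hc]] := exists_norm_bound_lt1 hq.
have eps_real : eps = (complex.Re eps)%:C%C by rewrite RRe_real ?gtr0_real.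
have Re_eps0 : 0 < complex.Re eps by rewrite -ltcR -eps_real.
have [K cK] := exists_expr_lt c_ge0 c_lt1 Re_eps0.
have [N hN] := qcost_trunc_unbounded nt K.
exists N => m Nm; rewrite subr0.
have [->|nz] := eqVneq (qword q (trunc gamma m) (trunc beta m)) 0; first by rewrite normr0.
rewrite (le_lt_trans (norm_qword_le c_ge0 hc _ _)) // eps_real ltcR.
rewrite (le_lt_trans _ cK) // -(subnKC (hN m Nm (qword_perm_eq nz))) exprD.
by rewrite ler_piMr ?exprn_ge0 // exprn_ile1 // ltW.
Qed.

Definition qlim (gamma beta : infmi d) : R[i] :=
  if pselect (exists n, shift n beta = shift n gamma) is left tail
  then qword q (trunc gamma (projT1 (cid tail))) (trunc beta (projT1 (cid tail)))
  else 0.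

Lemma qlim_tail (gamma beta : infmi d) n :
  shift n beta = shift n gamma -> qlim gamma beta = qword q (trunc gamma n) (trunc beta n).
Proof.
move=> e; rewrite /qlim; case: pselect => [tail|]; last by case; exists n.
case: (cid tail) => n0 e0 /=.
by rewrite -(qword_trunc_shift q e0 (leq_maxl n0 n)) (qword_trunc_shift q e (leq_maxr n0 n)).
Qed.

Lemma qlim_notail (gamma beta : infmi d) :
  (forall n, shift n beta <> shift n gamma) -> qlim gamma beta = 0.
Proof. by move=> nt; rewrite /qlim; case: pselect => // tail; have [n /nt] := tail. Qed.

Variable F : FockRep q.

Lemma qF_trunc_cvg (beta gamma : infmi d) :
  seq_cvg_to (fun m => qF F (trunc gamma m) (trunc beta m)) (qlim gamma beta).
Proof.
under [fun m => _]funext => m do rewrite qF_qword.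
have [[n e]|nt] := pselect (exists n, shift n beta = shift n gamma).
  rewrite (qlim_tail e); apply: seq_cvg_eventually.
  by exists n => m; apply: qword_trunc_shift.
have nt' n : shift n beta <> shift n gamma by move=> e; apply: nt; exists n.
by rewrite qlim_notail //; apply: qword_trunc_cvg0.
Qed.

Lemma qlim_conj (beta gamma : infmi d) : qlim gamma beta = (qlim beta gamma)^*.
Proof.
have [[n e]|nt] := pselect (exists n, shift n beta = shift n gamma).
  by rewrite (qlim_tail e) (qlim_tail (esym e)) -!(qF_qword F) qF_conj.
by rewrite !qlim_notail ?conjC0 // => n e; apply: nt; exists n => //; rewrite e.
Qed.

Lemma qlim_gram_ge0 n (c : 'I_n -> R[i]) (b : 'I_n -> infmi d) :
  0 <= \sum_(k < n) \sum_(l < n) c k * (c l)^* * qlim (b l) (b k).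
Proof.
apply: (seq_cvg_ge0 _ (fun m => qF_gram_ge0 F c (fun k => trunc (b k) m))).
apply: seq_cvg_sum => k; apply: seq_cvg_sum => l.
under [fun m => _]funext => m do rewrite -mulrA.
by rewrite -mulrA; do 2![apply: seq_cvgMl]; apply: qF_trunc_cvg.
Qed.

End Limit.

Theorem mainTheorem1 (R : realType) (d : nat) (q : 'I_d -> 'I_d -> R[i])
  (hd : (2 <= d)%N)
  (hq_norm : forall i j : 'I_d, i != j -> `|q i j| < 1)
  (hq_conj : forall i j : 'I_d, i != j -> q i j = (q j i)^*)
  (F : FockRep q) (alpha : infmi d) :
  exists qlim : infmi d -> infmi d -> R[i],
    (* the limit q(gamma, beta) exists for all beta, gamma *)
    (forall beta gamma : infmi d,
       seq_cvg_to (fun m => qF F (trunc gamma m) (trunc beta m)) (qlim gamma beta))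
    (* the form (e_beta, e_gamma) := q(gamma, beta) on H~_alpha is Hermitian *)
    /\ (forall beta gamma : infmi d, mi_equiv beta alpha -> mi_equiv gamma alpha ->
          qlim gamma beta = (qlim beta gamma)^*)
    (* ... and positive *)
    /\ (forall (n : nat) (c : 'I_n -> R[i]) (b : 'I_n -> infmi d),
          (forall k, mi_equiv (b k) alpha) ->
          0 <= \sum_(k < n) \sum_(l < n) c k * (c l)^* * qlim (b l) (b k))
    (* (e_beta, e_gamma) = 0 unless sigma^m beta = sigma^m gamma for some m *)
    /\ (forall beta gamma : infmi d, mi_equiv beta alpha -> mi_equiv gamma alpha ->
          (forall m : nat, shift m beta <> shift m gamma) -> qlim gamma beta = 0)
    (* in which case it equals the Fock inner product of the truncations *)
    /\ (forall (beta gamma : infmi d) (m : nat),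
          mi_equiv beta alpha -> mi_equiv gamma alpha ->
          shift m beta = shift m gamma ->
          qlim gamma beta = fock_ip F (trunc beta m) (trunc gamma m)).
Proof.
(* hq_conj is what makes a Fock representation F exist; given F, Hermitian
   symmetry is inherited from its inner product. *)
exists (qlim q); split; first exact: qF_trunc_cvg.
split; first by move=> beta gamma _ _; exact: (qlim_conj F).
split; first by move=> n c b _; exact: (qlim_gram_ge0 hq_norm F).
split; first by move=> beta gamma _ _; exact: qlim_notail.
by move=> beta gamma m _ _ e; rewrite (qlim_tail q e) -(qF_qword F) qF_fock_ip.
Qed.
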